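(* Let $(a,b,c)$ be a standard Pythagorean triple. Then there exist polynomials $\mathcal{A}(q),\mathcal{B}(q),\mathcal{C}(q)\in\mathbb{Z}[q]$ such that: (0) they satisfy the $q$-deformed Pythagoras equation $$\mathcal{A}(q)^2+q\,\mathcal{B}(q)^2=\mathcal{C}(q)\,\mathcal{C}^*(q),\qquad\text{where } \mathcal{C}^*(q):=q^{\deg(\mathcal{C})}\,\mathcal{C}(q^{-1});$$ (1) $\mathcal{A},\mathcal{B},\mathcal{C}$ have positive integer coefficients; (2) $\mathcal{A}$ and $\mathcal{B}$ are self-reciprocal (palindromic), i.e. $q^{\deg P}P(q^{-1})=P(q)$ for $P\in\{\mathcal{A},\mathcal{B}\}$; (3) $\mathcal{A},\mathcal{B},\mathcal{C}$ and $\mathcal{C}^*$ are monic, i.e. their leading coefficient and their lowest-degree coefficient are both equal to $1$; and moreover $(\mathcal{A}(1),\mathcal{B}(1),\mathcal{C}(1))=(a,b,c)$.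
   Context: A Pythagorean triple is a triple $(a,b,c)$ of positive integers with $a^2+b^2=c^2$. It is called standard if either $\gcd(a,b,c)=1$ and $a$ is even, or $\gcd(a,b,c)=2$ and $a/2$ is odd. (The order matters: $a$ and $b$ are not interchangeable.) *)

From mathcomp Require Import all_boot all_order all_algebra.
Set Implicit Arguments. Unset Strict Implicit. Unset Printing Implicit Defensive.
Import Order.TTheory GRing.Theory Num.Theory.
Local Open Scope ring_scope.

Definition standard_triple (a b c : nat) : Prop :=
  [/\ (0 < a)%N, (0 < b)%N, (0 < c)%N, (a ^ 2 + b ^ 2 = c ^ 2)%N &
      ((gcdn (gcdn a b) c = 1%N /\ ~~ odd a) \/
       (gcdn (gcdn a b) c = 2%N /\ odd (a %/ 2)%N))].

(* P^*(q) := q^{deg P} P(q^{-1}), with deg P = (size P).-1: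
   the coefficient of q^i in P^* is the coefficient of q^{deg P - i} in P. *)
Definition recip (P : {poly int}) : {poly int} :=
  \poly_(i < size P) P`_((size P).-1 - i).

Definition pos_coefs (P : {poly int}) : Prop :=
  forall i : nat, (i < size P)%N -> 0 < P`_i.

Definition monic2 (P : {poly int}) : Prop :=
  lead_coef P = 1 /\ P`_0 = 1.

(* Every standard triple is (2mn, m^2 - n^2, m^2 + n^2) with 0 < n < m (when
   gcd(a,b,c) = 2 both m and n are odd).  Replacing integers by q-integers
   [k] = 1 + q + ... + q^(k-1) gives
     A = [n][m](1 + q^(m-n+1)),   B = [m-n][m+n],   C = [n]^2 + q[m]^2,
   so that C^* = [m]^2 + q^(2(m-n)+1)[n]^2, and the q-analogue
   [m-n][m+n] = [m]^2 - q^(m-n)[n]^2 of m^2 - n^2 = (m-n)(m+n) turns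
   A^2 + qB^2 = C C^* into a polynomial identity.  Positivity, palindromicity
   and monicity are inherited from the q-integers.  Below, m = j + n. *)

From mathcomp Require Import all_boot all_order all_algebra.
From mathcomp Require Import zify ring.
Import Order.TTheory GRing.Theory Num.Theory.

Lemma coprime_mul_sqr_gcdn {x y k} : coprime x y -> x * y = k * k ->
  x = gcdn x k * gcdn x k.
Proof.
move=> co_xy xy_sqr; set g := gcdn x k.
apply/eqP; rewrite eqn_dvd; apply/andP; split.
  rewrite {2}/g muln_gcdr dvdn_gcd dvdn_mull //=.
  by rewrite /g muln_gcdl dvdn_gcd dvdn_mulr //= -xy_sqr dvdn_mulr.
have co_g2y : coprime (g * g) y.
  by rewrite coprimeMl; apply/andP; split; apply: coprime_dvdl (dvdn_gcdl _ _) co_xy.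
by rewrite -(Gauss_dvdl _ co_g2y) xy_sqr dvdn_mul ?dvdn_gcdr.
Qed.

Lemma standard_triple_halves {a b c} : standard_triple a b c ->
  exists k y, [/\ a = 2 * k, c = b + 2 * y, 0 < y,
                  (b + y) * y = k * k & coprime (b + y) y].
Proof.
case=> a_gt0 b_gt0 c_gt0 pyth std.
have a_even : ~~ odd a.
  case: std => [[_ //]|[gcd2 _]].
  by rewrite -dvdn2 -gcd2 (dvdn_trans (dvdn_gcdl _ _) (dvdn_gcdl _ _)).
have lt_bc : b < c by rewrite -(ltn_sqr b c) -pyth; nia.
have cb_even : 2 %| c - b.
  have /(congr1 odd) := pyth; rewrite oddD !oddX /= (negPf a_even) /= => odd_bc.
  by rewrite dvdn2 oddB ?(ltnW lt_bc) // -odd_bc addbb.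
set k := a %/ 2; set y := (c - b) %/ 2.
have def_a : a = 2 * k by rewrite /k mulnC divnK ?dvdn2.
have def_c : c = b + 2 * y by rewrite /y mulnC divnK //; lia.
have xy_sqr : (b + y) * y = k * k by move: pyth; rewrite def_a def_c; nia.
exists k, y; split=> //; first lia.
set g := gcdn (b + y) y.
have g_y : g %| y := dvdn_gcdr _ _.
have g_b : g %| b by rewrite -(dvdn_addl _ g_y) dvdn_gcdl.
have g_k : g %| k.
  by rewrite -(@dvdn_pexp2r _ _ 2) // !expnS !expn0 !muln1 -xy_sqr dvdn_mul ?dvdn_gcdl.
have g_abc : g %| gcdn (gcdn a b) c.
  by rewrite !dvdn_gcd def_a def_c dvdn_mull //= g_b dvdn_add ?dvdn_mull.
case: std => [[gcd1 _]|[gcd2 odd_k]].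
  by rewrite /coprime -/g -dvdn1 -gcd1.
have /eqP gcd2k : coprime 2 k by rewrite coprime2n.
by rewrite /coprime -/g -dvdn1 -gcd2k dvdn_gcd -gcd2 g_abc.
Qed.

Lemma standard_triple_param a b c : standard_triple a b c ->
  exists n j, [/\ 0 < n, 0 < j, a = 2 * ((j + n) * n), b = j * (j + n + n)
                & c = n * n + (j + n) * (j + n)].
Proof.
move=> std; have [_ b_gt0 _ _ _] := std.
have [k [y [def_a def_c y_gt0 xy_sqr co_xy]]] := standard_triple_halves std.
set m := gcdn (b + y) k; set n := gcdn y k.
have def_x : b + y = m * m := coprime_mul_sqr_gcdn co_xy xy_sqr.
have def_y : y = n * n.
  by apply: (@coprime_mul_sqr_gcdn _ (b + y)); rewrite 1?coprime_sym 1?mulnC.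
have def_k : k = m * n.
  by apply/eqP; rewrite -(eqn_sqr _ (m * n)) !expnS !expn0 !muln1 -xy_sqr def_x def_y; nia.
have lt_nm : n < m by rewrite -ltn_sqr !expnS !expn0 !muln1 -def_x def_y; lia.
exists n, (m - n); rewrite subnK ?(ltnW lt_nm) //; split; lia.
Qed.

Local Open Scope ring_scope.

(* [revp d P] is q^d P(1/q) whenever deg P <= d. *)
Section Reversal.

Variable R : comNzRingType.
Implicit Types P Q : {poly R}.

Definition revp (d : nat) P : {poly R} := \poly_(i < d.+1) P`_(d - i).

Lemma revpD d P Q : revp d (P + Q) = revp d P + revp d Q.
Proof. by apply/polyP => k; rewrite coefD !coef_poly; case: ifP; rewrite ?coefD ?addr0. Qed.

Lemma revpZ d c P : revp d (c *: P) = c *: revp d P.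
Proof. by apply/polyP => k; rewrite coefZ !coef_poly; case: ifP; rewrite ?coefZ ?mulr0. Qed.

Lemma revp_sum d (I : Type) (r : seq I) (F : I -> {poly R}) :
  revp d (\sum_(i <- r) F i) = \sum_(i <- r) revp d (F i).
Proof.
apply: (big_morph _ (revpD d)).
by apply/polyP => k; rewrite coef_poly !coef0 if_same.
Qed.

Lemma revpXn d i : (i <= d)%N -> revp d 'X^i = 'X^(d - i).
Proof.
move=> le_id; apply/polyP => k; rewrite coef_poly !coefXn.
case: ltnP => [lt_kd|le_dk]; first by congr _%:R; apply/eqP/eqP; lia.
by case: eqP => //; lia.
Qed.

Lemma revpM d1 d2 P Q : (size P <= d1.+1)%N -> (size Q <= d2.+1)%N ->
  revp (d1 + d2) (P * Q) = revp d1 P * revp d2 Q.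
Proof.
move=> sP sQ; rewrite -[P]coefK -[Q]coefK !poly_def.
rewrite mulr_suml !revp_sum mulr_suml; apply: eq_bigr => i _.
rewrite !mulr_sumr !revp_sum; apply: eq_bigr => k _.
have ltiP := ltn_ord i; have ltkQ := ltn_ord k.
rewrite -scalerAl -scalerAr !revpZ -exprD !revpXn; try lia.
by rewrite -scalerAl -scalerAr -exprD; congr (_ *: (_ *: 'X^_)); lia.
Qed.

End Reversal.

Arguments revp {R} d P.

Implicit Types P Q : {poly int}.

Lemma recipE P : recip P = revp (size P).-1 P.
Proof.
have [->|nzP] := eqVneq P 0.
  by rewrite /recip /revp size_poly0 !poly_def big_ord0 big_ord1 coef0 scale0r.
by rewrite /recip /revp prednK // lt0n size_poly_eq0.
Qed.

Lemma recipM P Q : recip (P * Q) = recip P * recip Q.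
Proof.
have [->|nzP] := eqVneq P 0; first by rewrite mul0r /recip size_poly0 !poly_def !big_ord0 mul0r.
have [->|nzQ] := eqVneq Q 0; first by rewrite mulr0 /recip size_poly0 !poly_def !big_ord0 mulr0.
have sP : (0 < size P)%N by rewrite lt0n size_poly_eq0.
have sQ : (0 < size Q)%N by rewrite lt0n size_poly_eq0.
rewrite !recipE size_mul // -revpM ?prednK //; congr revp.
by case: (size P) sP => // p _; case: (size Q) sQ => // q _; rewrite addnS.
Qed.

Lemma recipXn k : recip 'X^k = 1.
Proof. by rewrite recipE size_polyXn revpXn // subnn expr0. Qed.

Lemma recipD P Q : P != 0 -> (size P < size Q)%N ->
  recip (P + Q) = 'X^(size Q - size P) * recip P + recip Q.
Proof.
move=> nzP ltPQ; have sP : (0 < size P)%N by rewrite lt0n size_poly_eq0.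
rewrite !recipE.
have -> : size (P + Q) = size Q by rewrite addrC size_polyDl.
rewrite revpD; congr (_ + _).
have -> : (size Q).-1 = ((size P).-1 + (size Q - size P))%N by lia.
rewrite -[P in revp _ P]mulr1 revpM ?size_poly1 ?prednK //.
by rewrite -(expr0 ('X : {poly int})) revpXn // subn0 mulrC.
Qed.

Lemma coef0_recip P : (recip P)`_0 = lead_coef P.
Proof.
rewrite coef_poly lead_coefE subn0; case: ltnP => // sP0.
by rewrite nth_default // (leq_trans sP0).
Qed.

Lemma lead_coef_recip P : P`_0 != 0 -> lead_coef (recip P) = P`_0.
Proof.
move=> nz0.
have sP : (0 < size P)%N by rewrite lt0n size_poly_eq0; apply: contraNneq nz0 => ->; rewrite coef0.
by rewrite /recip lead_coefE size_poly_eq ?subnn // coef_poly subnn ltn_predL sP.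
Qed.

Lemma monic2_recip P : monic2 P -> monic2 (recip P).
Proof. by case=> lcP P0; split; rewrite ?lead_coef_recip ?coef0_recip ?P0. Qed.

Lemma monic2M P Q : monic2 P -> monic2 Q -> monic2 (P * Q).
Proof. by case=> lcP P0 [lcQ Q0]; split; rewrite ?lead_coefM ?coef0M ?lcP ?P0 ?lcQ ?Q0 mulr1. Qed.

Lemma monic2_Xn_add1 k : monic2 ('X^(k.+1) + 1).
Proof. by split; rewrite -?polyC1 ?lead_coefXnaddC // coefD coefXn coefC. Qed.

Lemma pos_coefs_ge0 P : pos_coefs P -> forall i, 0 <= P`_i.
Proof.
move=> posP i; case: (ltnP i (size P)) => [/posP/ltW //|le_Pi].
by rewrite nth_default.
Qed.

Lemma pos_coefsM P Q : pos_coefs P -> pos_coefs Q -> pos_coefs (P * Q).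
Proof.
move=> posP posQ.
have [->|nzP] := eqVneq P 0; first by rewrite mul0r => i; rewrite size_poly0.
have [->|nzQ] := eqVneq Q 0; first by rewrite mulr0 => i; rewrite size_poly0.
have sP : (0 < size P)%N by rewrite lt0n size_poly_eq0.
have sQ : (0 < size Q)%N by rewrite lt0n size_poly_eq0.
move=> i; rewrite size_mul // => lt_i.
pose k := minn i (size P).-1.
have le_ki : (k < i.+1)%N by rewrite ltnS geq_minl.
rewrite coefM (bigD1 (Ordinal le_ki)) //=.
apply: ltr_wpDr.
  by apply: sumr_ge0 => l _; apply: mulr_ge0; apply: pos_coefs_ge0.
apply: mulr_gt0; [apply: posP | apply: posQ];
  by move: lt_i sP sQ; rewrite /k; move: (size P) (size Q) => p q; lia.
Qed.

Lemma pos_coefsD_XnM P Q k : pos_coefs P -> pos_coefs Q ->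
  (k <= size P)%N -> (size P < k + size Q)%N -> pos_coefs (P + 'X^k * Q).
Proof.
move=> posP posQ le_kP lt_PkQ.
have nzQ : Q != 0 by rewrite -size_poly_eq0; lia.
have sXQ : size ('X^k * Q) = (k + size Q)%N by rewrite mulrC size_mulXn.
move=> i; rewrite addrC size_polyDl sXQ // => lt_i.
rewrite coefD coefXnM; case: ltnP => [lt_ik|le_ki].
  by rewrite add0r; apply: posP; lia.
by apply: ltr_wpDr; [apply: pos_coefs_ge0 | apply: posQ; lia].
Qed.

Definition qint (k : nat) : {poly int} := \poly_(i < k) 1.

Lemma coef_qint k i : (qint k)`_i = (i < k)%N%:R.
Proof. by rewrite coef_poly; case: ifP. Qed.

Lemma size_qint k : size (qint k) = k.
Proof. by rewrite size_poly_eq // oner_neq0. Qed.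

Lemma qint_eq0 k : (qint k == 0) = (k == 0%N).
Proof. by rewrite -size_poly_eq0 size_qint. Qed.

Lemma qintD k l : qint (k + l) = qint k + 'X^k * qint l.
Proof.
apply/polyP => i; rewrite coefD coefXnM !coef_qint.
case: (ltnP i k) => [lt_ik|le_ki]; first by rewrite addr0; have -> : (i < k + l)%N by lia.
by rewrite add0r; have -> : (i < k + l)%N = (i - k < l)%N by apply/idP/idP; lia.
Qed.

Lemma qint1 k : (qint k).[1] = k%:Z.
Proof.
rewrite horner_poly; under eq_bigr do rewrite expr1n mulr1.
by rewrite sumr_const card_ord natz.
Qed.

Lemma recip_qint k : recip (qint k) = qint k.
Proof.
apply/polyP => i; rewrite coef_poly size_qint !coef_qint.
by case: ltnP => [lt_ik|//]; have -> : (k.-1 - i < k)%N by lia.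
Qed.

Lemma pos_coefs_qint k : pos_coefs (qint k).
Proof. by move=> i; rewrite size_qint coef_qint => ->. Qed.

Lemma monic2_qint k : (0 < k)%N -> monic2 (qint k).
Proof. by move=> k_gt0; rewrite /monic2 lead_coefE size_qint !coef_qint ltn_predL k_gt0. Qed.

Lemma size_qint_sqr k : (0 < k)%N -> size (qint k ^+ 2) = (k + k).-1.
Proof. by move=> k_gt0; rewrite expr2 size_mul ?qint_eq0 -?lt0n ?size_qint. Qed.

Lemma pos_coefs_qint_sqr k : pos_coefs (qint k ^+ 2).
Proof. by rewrite expr2; apply: pos_coefsM; apply: pos_coefs_qint. Qed.

Lemma monic2_qint_sqr {k} : (0 < k)%N -> monic2 (qint k ^+ 2).
Proof. by move=> k_gt0; rewrite expr2; apply: monic2M; apply: monic2_qint. Qed.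

Lemma qint_mul_sub j n :
  qint j * qint (j + n + n) = qint (j + n) ^+ 2 - 'X^j * qint n ^+ 2.
Proof.
have -> : qint (j + n + n) = qint n + 'X^n * qint j + 'X^(j + n) * qint n.
  by rewrite qintD (addnC j n) qintD.
have -> : qint (j + n) ^+ 2 = (qint j + 'X^j * qint n) * (qint n + 'X^n * qint j).
  by rewrite expr2 {1}qintD (addnC j n) qintD.
by rewrite exprD; ring.
Qed.

Lemma recip_Xn_add1 k : recip ('X^(k.+1) + 1) = 'X^(k.+1) + 1.
Proof.
rewrite addrC recipD ?oner_neq0 ?size_polyXn ?size_poly1 //.
by rewrite subn1 (recipXn 0) recipXn mulr1 addrC.
Qed.

Section Construction.

Variables n j : nat.

Definition qA : {poly int} := qint n * qint (j + n) * ('X^(j.+1) + 1).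
Definition qB : {poly int} := qint j * qint (j + n + n).
Definition qC : {poly int} := qint n ^+ 2 + 'X * qint (j + n) ^+ 2.

Lemma qA1 : qA.[1] = (2 * ((j + n) * n))%N%:Z.
Proof. by rewrite /qA -polyC1 !(hornerM, hornerD, hornerXn, hornerC, qint1) expr1n; lia. Qed.

Lemma qB1 : qB.[1] = (j * (j + n + n))%N%:Z.
Proof. by rewrite /qB hornerM !qint1; lia. Qed.

Lemma qC1 : qC.[1] = (n * n + (j + n) * (j + n))%N%:Z.
Proof. by rewrite /qC !(hornerM, hornerD, hornerX, qint1) mul1r; lia. Qed.

Lemma recip_qA : recip qA = qA.
Proof. by rewrite /qA !recipM !recip_qint recip_Xn_add1. Qed.

Lemma recip_qB : recip qB = qB.
Proof. by rewrite /qB recipM !recip_qint. Qed.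

Hypotheses (n_gt0 : (0 < n)%N) (j_gt0 : (0 < j)%N).

Let m_gt0 : (0 < j + n)%N. Proof. by rewrite addn_gt0 j_gt0. Qed.

Let size_XqC : size ('X * qint (j + n) ^+ 2) = (j + n + (j + n))%N.
Proof.
have nzR2 : qint (j + n) ^+ 2 != 0 by rewrite expf_neq0 // qint_eq0 -lt0n.
by rewrite mulrC size_mulX // size_qint_sqr //; lia.
Qed.

Lemma recip_qC : recip qC = qint (j + n) ^+ 2 + 'X^(j + j + 1) * qint n ^+ 2.
Proof.
rewrite /qC recipD; last by rewrite size_XqC size_qint_sqr //; lia.
  rewrite size_XqC size_qint_sqr // recipM (recipXn 1) mul1r.
  rewrite !expr2 !recipM !recip_qint addrC; congr (_ + 'X^_ * _); lia.
by rewrite expf_neq0 // qint_eq0 -lt0n.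
Qed.

Lemma qA_qB_qC_pyth : qA ^+ 2 + 'X * qB ^+ 2 = qC * recip qC.
Proof. by rewrite recip_qC /qB qint_mul_sub /qA /qC !exprD expr1 (exprS 'X j); ring. Qed.

Lemma pos_coefs_qA : pos_coefs qA.
Proof.
have -> : qA = qint n * (qint (j + n) + 'X^(j.+1) * qint (j + n)) by rewrite /qA; ring.
apply: pos_coefsM (pos_coefs_qint _) _.
by apply: pos_coefsD_XnM; rewrite ?size_qint; try apply: pos_coefs_qint; lia.
Qed.

Lemma pos_coefs_qB : pos_coefs qB.
Proof. by apply: pos_coefsM; apply: pos_coefs_qint. Qed.

Lemma pos_coefs_qC : pos_coefs qC.
Proof.
apply: (@pos_coefsD_XnM _ _ 1); rewrite ?size_qint_sqr //;
  try apply: pos_coefs_qint_sqr; lia.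
Qed.

Lemma monic2_qA : monic2 qA.
Proof. by apply: monic2M (monic2_Xn_add1 _); apply: monic2M; apply: monic2_qint. Qed.

Lemma monic2_qB : monic2 qB.
Proof. by apply: monic2M; apply: monic2_qint; lia. Qed.

Lemma monic2_qC : monic2 qC.
Proof.
have [_ S20] := monic2_qint_sqr n_gt0.
have [lcR2 _] := monic2_qint_sqr m_gt0.
split; last by rewrite coefD coefXM S20 addr0.
rewrite lead_coefDr ?size_XqC ?size_qint_sqr //; last lia.
by rewrite mulrC lead_coefMX.
Qed.

End Construction.

Theorem theorem1 (a b c : nat) :
  standard_triple a b c ->
  exists A B C : {poly int},
    [/\ A ^+ 2 + 'X * B ^+ 2 = C * recip C,
        [/\ pos_coefs A, pos_coefs B & pos_coefs C],
        recip A = A /\ recip B = B,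
        [/\ monic2 A, monic2 B, monic2 C & monic2 (recip C)] &
        [/\ A.[1] = a%:Z, B.[1] = b%:Z & C.[1] = c%:Z]].
Proof.
move=> /standard_triple_param [n [j [n_gt0 j_gt0 -> -> ->]]].
exists (qA n j), (qB n j), (qC n j); split.
- exact: qA_qB_qC_pyth.
- by split; [apply: pos_coefs_qA | apply: pos_coefs_qB | apply: pos_coefs_qC].
- exact: conj (recip_qA n j) (recip_qB n j).
- split; [exact: monic2_qA | exact: monic2_qB | exact: monic2_qC |].
  exact/monic2_recip/monic2_qC.
- exact: And3 (qA1 n j) (qB1 n j) (qC1 n j).
Qed.
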